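(* Fix $\kappa>0$ and $x_0\in\mathbb R^2$. Let $m\in\mathbb Z\setminus\{0\}$, $\Phi(\alpha):=-m\,\vec\alpha\cdot x_0$, $I=[a,b]\subset[-\pi,\pi]$, $l\in\mathbb Z$, and $g\in C^1(I)$. Suppose (1) $\Phi''(\alpha)\ne0$ for $\alpha\in(a,b)$; (2) there is $\alpha_0\in I$ with $\kappa\Phi'(\alpha_0)=l$ and $\Phi''(\alpha_0)\neq0$; (3) $|\kappa\Phi'(\alpha)-l|\le1/2$ for all $\alpha\in I$. Then for every $\epsilon>0$, $$\Bigl|\int_I g(\alpha)h_l(\alpha)\,e\Bigl(\frac{\Phi_l(\alpha)}{\epsilon}\Bigr)d\alpha\Bigr|\le c\,\epsilon^{1/2}\Bigl[\max_{I}|g|+\int_I|g'(\alpha)|\,d\alpha\Bigr]\,|\Phi''(\alpha_0)|^{-1/2},$$ where $c$ depends only on $\kappa$ and $x_0$ (it is independent of $g$, $m$, $\epsilon$, $l$ and $I$).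
   Context: $\vec\alpha=(\cos\alpha,\sin\alpha)$, $e(r):=\exp(2\pi ir)$. For the given $\Phi$ and $l$: $\Phi_l(\alpha):=\Phi(\alpha)-(l/\kappa)\alpha$, and $h_l(\alpha):=\dfrac{\pi\kappa\Phi_l'(\alpha)}{\sin(\pi\kappa\Phi_l'(\alpha))}$ if $\Phi_l'(\alpha)\neq0$, $h_l(\alpha):=1$ if $\Phi_l'(\alpha)=0$ (note $\kappa\Phi_l'=\kappa\Phi'-l\in[-1/2,1/2]$ on $I$). *)

From Stdlib Require Import Reals.
From Coquelicot Require Import Coquelicot.
Open Scope R_scope.

Definition e (r : R) : C := (cos (2 * PI * r), sin (2 * PI * r)).

Definition CInt (f : R -> C) (a b : R) : C :=
  (RInt (fun t => fst (f t)) a b, RInt (fun t => snd (f t)) a b).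

Definition dotdir (x0 : R * R) (alpha : R) : R :=
  cos alpha * fst x0 + sin alpha * snd x0.

Definition Phi (m : Z) (x0 : R * R) (alpha : R) : R := - IZR m * dotdir x0 alpha.

Definition Phi_l (kappa : R) (m : Z) (x0 : R * R) (l : Z) (alpha : R) : R :=
  Phi m x0 alpha - (IZR l / kappa) * alpha.

Definition h_l (kappa : R) (m : Z) (x0 : R * R) (l : Z) (alpha : R) : R :=
  let d := Derive (Phi_l kappa m x0 l) alpha in
  if Req_EM_T d 0 then 1 else (PI * kappa * d) / sin (PI * kappa * d).

Definition C1_on_with (g g' : R -> R) (a b : R) : Prop :=
  forall x, a <= x <= b ->
    filterdiff g (within (fun y => a <= y <= b) (locally x)) (fun h => scal h (g' x)) /\
    filterlim g' (within (fun y => a <= y <= b) (locally x)) (locally (g' x)).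

From Stdlib Require Import Reals Lra Classical_Prop.
From Coquelicot Require Import Coquelicot.
Open Scope R_scope.

(* Since [kappa Phi_l'] stays in [[-1/2, 1/2]], [h_l] is [x / sin x] at [x = pi kappa Phi_l'],
   hence continuous and bounded by 2, and [h_l e(Phi_l / eps) = Q (e(Phi_l / eps))' / i] with
   [Q = eps kappa / (2 sin (pi kappa Phi_l'))].  As [Phi''] keeps one sign on [I] and
   [cos (pi kappa Phi_l') >= 0], [Q] is monotone, so integrating by parts over a subinterval
   where [|Phi_l'| >= lam] gives the van der Corput bound [O(eps / lam)].  A sum-to-product
   identity gives [|Phi_l'(alpha)| >= |Phi''(alpha0)| |alpha - alpha0| / 4] on [I]; cutting out
   [alpha0 +- rho] with [rho = sqrt (eps / |Phi''(alpha0)|)] then bounds every tail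
   [int_t^b h_l e(Phi_l / eps)] by [20 rho], in real and imaginary part.  A last integration
   by parts against [g] turns the tail bounds into the factor [max |g| + int |g'|]. *)

Definition dPhi (m : Z) (x0 : R * R) (t : R) : R :=
  IZR m * (fst x0 * sin t - snd x0 * cos t).

Definition ddPhi (m : Z) (x0 : R * R) (t : R) : R :=
  IZR m * (fst x0 * cos t + snd x0 * sin t).

Definition dPhi_l (kappa : R) (m : Z) (x0 : R * R) (l : Z) (t : R) : R :=
  dPhi m x0 t - IZR l / kappa.

Lemma is_derive_Phi m x0 t : is_derive (Phi m x0) t (dPhi m x0 t).
Proof. unfold Phi, dotdir, dPhi; auto_derive; [easy | ring]. Qed.

Lemma is_derive_dPhi m x0 t : is_derive (dPhi m x0) t (ddPhi m x0 t).
Proof. unfold dPhi, ddPhi; auto_derive; [easy | ring]. Qed.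

Lemma is_derive_Phi_l kappa m x0 l t :
  is_derive (Phi_l kappa m x0 l) t (dPhi_l kappa m x0 l t).
Proof. unfold Phi_l, Phi, dotdir, dPhi_l, dPhi; auto_derive; [easy | ring]. Qed.

Lemma Derive_Phi m x0 t : Derive (Phi m x0) t = dPhi m x0 t.
Proof. exact (is_derive_unique _ _ _ (is_derive_Phi m x0 t)). Qed.

Lemma Derive_Derive_Phi m x0 t : Derive (Derive (Phi m x0)) t = ddPhi m x0 t.
Proof.
  rewrite (Derive_ext _ (dPhi m x0)) by apply Derive_Phi.
  exact (is_derive_unique _ _ _ (is_derive_dPhi m x0 t)).
Qed.

Lemma Derive_Phi_l kappa m x0 l t :
  Derive (Phi_l kappa m x0 l) t = dPhi_l kappa m x0 l t.
Proof. exact (is_derive_unique _ _ _ (is_derive_Phi_l kappa m x0 l t)). Qed.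

Lemma continuous_ddPhi m x0 t : continuous (ddPhi m x0) t.
Proof. apply (ex_derive_continuous (ddPhi m x0)); unfold ddPhi; auto_derive; easy. Qed.

Definition sinc (y : R) : R := if Req_EM_T y 0 then 1 else sin y / y.

Lemma sin_ge_half_id y : 0 <= y <= PI / 2 -> y / 2 <= sin y.
Proof.
  intros [Hy0 Hy1]. pose proof pi2_int. pose proof PI_RGT_0.
  destruct (SIN y) as [Hlb _]; [lra | lra |].
  assert (Hy2 : y ^ 2 <= 49 / 16) by (unfold PI in Hy1; nra).
  replace (sin_lb y) with (y - y ^ 3 / 6 + y ^ 5 / 120 - y ^ 7 / 5040) in Hlb
    by (unfold sin_lb, sin_approx, sin_term; simpl; field).
  assert (0 <= 1 / 2 - y ^ 2 / 6 + y ^ 4 / 120 - y ^ 6 / 5040) by nra.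
  nra.
Qed.

Lemma sinc_ge_half y : Rabs y <= PI / 2 -> 1 / 2 <= sinc y.
Proof.
  intros Hy. unfold sinc. destruct (Req_EM_T y 0) as [_ | Hy0]; [lra |].
  apply Rabs_le_between in Hy.
  destruct (Rle_or_lt 0 y) as [Hpos | Hneg].
  - pose proof (sin_ge_half_id y ltac:(lra)).
    apply Rmult_le_reg_r with y; [lra |].
    replace (sin y / y * y) with (sin y) by (field; lra). lra.
  - pose proof (sin_ge_half_id (- y) ltac:(lra)). rewrite sin_neg in *.
    apply Rmult_le_reg_r with (- y); [lra |].
    replace (sin y / y * - y) with (- sin y) by (field; lra). lra.
Qed.

Lemma continuous_sinc y : continuous sinc y.
Proof.
  destruct (Req_dec y 0) as [-> | Hy].
  - apply continuity_pt_filterlim. intros eps Heps.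
    destruct (derivable_pt_lim_sin 0 eps Heps) as [d Hd].
    exists d. split; [apply cond_pos |]. intros h [_ Hh]. simpl in Hh |- *. unfold Rdist in *.
    unfold sinc. destruct (Req_EM_T 0 0) as [_ | N]; [| easy].
    destruct (Req_EM_T h 0) as [-> | Hh0]; [rewrite Rminus_diag, Rabs_R0; lra |].
    rewrite Rminus_0_r in Hh. specialize (Hd h Hh0 Hh).
    rewrite Rplus_0_l, sin_0, cos_0, Rminus_0_r in Hd. exact Hd.
  - apply (continuous_ext_loc _ (fun z => sin z / z)).
    + exists (mkposreal _ (Rabs_pos_lt _ Hy)). intros z Hz. unfold sinc.
      destruct (Req_EM_T z 0) as [-> | _]; [| easy].
      change (Rabs (0 - y) < Rabs y) in Hz. rewrite Rminus_0_l, Rabs_Ropp in Hz. lra.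
    + apply (ex_derive_continuous (fun z => sin z / z)). auto_derive. exact Hy.
Qed.

Lemma Rabs_sin_ge_half y : Rabs y <= PI / 2 -> Rabs y / 2 <= Rabs (sin y).
Proof.
  intros Hy. pose proof (sinc_ge_half y Hy) as Hs. unfold sinc in Hs.
  destruct (Req_EM_T y 0) as [-> | Hy0]; [rewrite sin_0, Rabs_R0; lra |].
  replace (sin y) with (sin y / y * y) by (field; exact Hy0).
  rewrite Rabs_mult, (Rabs_right (sin y / y)) by lra.
  pose proof (Rabs_pos y). nra.
Qed.

Lemma dPhi_sub m x0 t s :
  dPhi m x0 t - dPhi m x0 s = 2 * sin ((t - s) / 2) * ddPhi m x0 ((t + s) / 2).
Proof.
  unfold dPhi, ddPhi.
  set (mu := (t + s) / 2). set (d := (t - s) / 2).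
  replace t with (mu + d) by (unfold mu, d; field).
  replace s with (mu - d) by (unfold mu, d; field).
  rewrite sin_plus, sin_minus, cos_plus, cos_minus. ring.
Qed.

Lemma ddPhi_add m x0 t s :
  ddPhi m x0 t + ddPhi m x0 s = 2 * cos ((t - s) / 2) * ddPhi m x0 ((t + s) / 2).
Proof.
  unfold ddPhi.
  set (mu := (t + s) / 2). set (d := (t - s) / 2).
  replace t with (mu + d) by (unfold mu, d; field).
  replace s with (mu - d) by (unfold mu, d; field).
  rewrite sin_plus, sin_minus, cos_plus, cos_minus. ring.
Qed.

Definition const_sign_on (f : R -> R) (u v : R) : Prop :=
  (forall t, u <= t <= v -> 0 <= f t) \/ (forall t, u <= t <= v -> f t <= 0).

Lemma const_sign_on_sub (f : R -> R) a b u v : a <= u -> v <= b ->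
  const_sign_on f a b -> const_sign_on f u v.
Proof. intros Hu Hv [H | H]; [left | right]; intros t Ht; apply H; lra. Qed.

Lemma const_sign_on_of_no_root (f : R -> R) a b :
  (forall t, continuous f t) -> (forall t, a < t < b -> f t <> 0) -> const_sign_on f a b.
Proof.
  intros Hf Hroot.
  destruct (classic (exists t, a <= t <= b /\ f t < 0)) as [[t1 [Ht1 Hneg]] | Hnone].
  - right. intros t2 Ht2. destruct (Rle_or_lt (f t2) 0) as [| Hpos]; [easy | exfalso].
    destruct (IVT_gen f t1 t2 0 (fun t => proj2 (continuity_pt_filterlim f t) (Hf t)))
      as [z [Hz Hz0]].
    { unfold Rmin, Rmax; destruct Rle_dec; lra. }
    assert (z <> t1) by (intros ->; lra). assert (z <> t2) by (intros ->; lra).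
    apply (Hroot z); [| easy]. unfold Rmin, Rmax in Hz; destruct Rle_dec; lra.
  - left. intros t Ht. destruct (Rle_or_lt 0 (f t)); [easy |]. exfalso. eauto.
Qed.

Lemma ex_RInt_continuous_le (f : R -> R) u v : u <= v ->
  (forall t, u <= t <= v -> continuous f t) -> ex_RInt f u v.
Proof.
  intros Huv Hf. apply (ex_RInt_continuous (V := R_CompleteNormedModule)).
  rewrite Rmin_left, Rmax_right by lra. exact Hf.
Qed.

Lemma RInt_ext_le (f g : R -> R) u v : u <= v ->
  (forall t, u < t < v -> f t = g t) -> RInt f u v = RInt g u v.
Proof.
  intros Huv H. apply RInt_ext. rewrite Rmin_left, Rmax_right by lra. exact H.
Qed.

Lemma RInt_Rabs_const_sign (f : R -> R) u v : u <= v ->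
  (forall t, u <= t <= v -> continuous f t) -> const_sign_on f u v ->
  RInt (fun t => Rabs (f t)) u v = Rabs (RInt f u v).
Proof.
  intros Huv Hf [Hpos | Hneg]; pose proof (ex_RInt_continuous_le f u v Huv Hf) as Hex.
  - rewrite (RInt_ext_le _ f u v Huv) by (intros t Ht; apply Rabs_right, Rle_ge, Hpos; lra).
    rewrite Rabs_right; [easy |]. apply Rle_ge, RInt_ge_0; [easy | easy |].
    intros t Ht; apply Hpos; lra.
  - rewrite (RInt_ext_le _ (fun t => opp (f t)) u v Huv)
      by (intros t Ht; apply Rabs_left1, Hneg; lra).
    rewrite (RInt_opp (V := R_CompleteNormedModule)) by easy. rewrite Rabs_left1; [easy |].
    apply Ropp_le_cancel. rewrite Ropp_0. change (0 <= opp (RInt f u v)).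
    rewrite <- (RInt_opp (V := R_CompleteNormedModule)) by easy. apply RInt_ge_0.
    + easy.
    + apply (ex_RInt_opp (V := R_CompleteNormedModule)), Hex.
    + intros t Ht. pose proof (Hneg t ltac:(lra)). unfold opp; simpl; lra.
Qed.

Lemma Rabs_RInt_mult_le (p S : R -> R) u v K : u <= v ->
  (forall t, u <= t <= v -> continuous p t) -> (forall t, u <= t <= v -> continuous S t) ->
  (forall t, u <= t <= v -> Rabs (S t) <= K) ->
  Rabs (RInt (fun t => p t * S t) u v) <= K * RInt (fun t => Rabs (p t)) u v.
Proof.
  intros Huv Cp CS HS.
  assert (Ex : ex_RInt (fun t => Rabs (p t)) u v).
  { apply ex_RInt_continuous_le; [easy |]. intros t Ht.
    apply (continuous_comp p Rabs); [auto | apply continuous_Rabs]. }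
  eapply Rle_trans.
  { apply abs_RInt_le; [easy |]. apply ex_RInt_continuous_le; [easy |].
    intros t Ht; apply (continuous_mult p S); auto. }
  rewrite <- (RInt_scal (V := R_CompleteNormedModule)) by exact Ex.
  apply RInt_le; [easy | | apply (ex_RInt_scal (V := R_CompleteNormedModule)), Ex |].
  - apply ex_RInt_continuous_le; [easy |]. intros t Ht.
    apply (continuous_comp (fun t => p t * S t) Rabs);
      [apply (continuous_mult p S); auto | apply continuous_Rabs].
  - intros t Ht. rewrite Rabs_mult. unfold scal; simpl; unfold mult; simpl.
    rewrite Rmult_comm. apply Rmult_le_compat_r; [apply Rabs_pos | apply HS; lra].
Qed.

Lemma RInt_mult_by_parts (Q Q' S S' : R -> R) u v : u <= v ->
  (forall t, u <= t <= v -> is_derive Q t (Q' t)) ->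
  (forall t, u <= t <= v -> is_derive S t (S' t)) ->
  (forall t, u <= t <= v -> continuous Q' t) ->
  (forall t, u <= t <= v -> continuous S' t) ->
  RInt (fun t => Q t * S' t) u v = Q v * S v - Q u * S u - RInt (fun t => Q' t * S t) u v.
Proof.
  intros Huv DQ DS CQ' CS'.
  assert (CQ : forall t, u <= t <= v -> continuous Q t)
    by (intros t Ht; apply (ex_derive_continuous Q); eexists; apply DQ, Ht).
  assert (CS : forall t, u <= t <= v -> continuous S t)
    by (intros t Ht; apply (ex_derive_continuous S); eexists; apply DS, Ht).
  assert (Ex1 : ex_RInt (fun t => Q t * S' t) u v)
    by (apply ex_RInt_continuous_le; [easy |]; intros t Ht; apply (continuous_mult Q S'); auto).
  assert (Ex2 : ex_RInt (fun t => Q' t * S t) u v)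
    by (apply ex_RInt_continuous_le; [easy |]; intros t Ht; apply (continuous_mult Q' S); auto).
  assert (Hftc : is_RInt (fun t => Q' t * S t + Q t * S' t) u v (Q v * S v - Q u * S u)).
  { apply (is_RInt_derive (fun t => Q t * S t)); rewrite Rmin_left, Rmax_right by easy.
    - intros t Ht. apply (is_derive_mult Q S); auto. intros; apply Rmult_comm.
    - intros t Ht. apply (continuous_plus (fun t => Q' t * S t) (fun t => Q t * S' t)).
      + apply (continuous_mult Q' S); auto.
      + apply (continuous_mult Q S'); auto. }
  apply (is_RInt_unique (V := R_CompleteNormedModule)) in Hftc.
  rewrite (RInt_plus (V := R_CompleteNormedModule)) in Hftc by easy.
  simpl in Hftc. unfold plus in Hftc; simpl in Hftc. lra.
Qed.

Lemma Rabs_RInt_mult_monotone_le (Q Q' S S' : R -> R) u v : u <= v ->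
  (forall t, u <= t <= v -> is_derive Q t (Q' t)) ->
  (forall t, u <= t <= v -> is_derive S t (S' t)) ->
  (forall t, u <= t <= v -> continuous Q' t) ->
  (forall t, u <= t <= v -> continuous S' t) ->
  const_sign_on Q' u v -> (forall t, u <= t <= v -> Rabs (S t) <= 1) ->
  Rabs (RInt (fun t => Q t * S' t) u v) <= 2 * (Rabs (Q u) + Rabs (Q v)).
Proof.
  intros Huv DQ DS CQ' CS' HQ' HS.
  assert (CS : forall t, u <= t <= v -> continuous S t)
    by (intros t Ht; apply (ex_derive_continuous S); eexists; apply DS, Ht).
  assert (HQ'int : RInt Q' u v = Q v - Q u).
  { apply (is_RInt_unique (V := R_CompleteNormedModule)), (is_RInt_derive Q Q');
      rewrite Rmin_left, Rmax_right; auto. }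
  assert (Hvar : Rabs (RInt (fun t => Q' t * S t) u v) <= Rabs (Q v - Q u)).
  { rewrite <- HQ'int, <- (RInt_Rabs_const_sign Q' u v) by auto.
    rewrite <- (Rmult_1_l (RInt (fun t => Rabs (Q' t)) u v)).
    apply Rabs_RInt_mult_le; auto. }
  rewrite (RInt_mult_by_parts Q Q' S S') by easy.
  pose proof (HS u ltac:(lra)); pose proof (HS v ltac:(lra)).
  pose proof (Rabs_pos (Q u)); pose proof (Rabs_pos (Q v)).
  assert (Rabs (Q v * S v) <= Rabs (Q v)) by (rewrite Rabs_mult; nra).
  assert (Rabs (Q u * S u) <= Rabs (Q u)) by (rewrite Rabs_mult; nra).
  assert (Rabs (Q v - Q u) <= Rabs (Q v) + Rabs (Q u))
    by (unfold Rminus; rewrite <- (Rabs_Ropp (Q u)); apply Rabs_triang).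
  unfold Rminus. eapply Rle_trans; [apply Rabs_triang |]. rewrite Rabs_Ropp.
  eapply Rle_trans; [apply Rplus_le_compat_r, Rabs_triang |]. rewrite Rabs_Ropp. lra.
Qed.

Definition clamp (a b x : R) : R := Rmax a (Rmin b x).

Lemma clamp_between a b x : a <= b -> a <= clamp a b x <= b.
Proof. intros. unfold clamp, Rmax, Rmin. repeat destruct Rle_dec; lra. Qed.

Lemma clamp_id a b x : a <= x <= b -> clamp a b x = x.
Proof. intros. unfold clamp, Rmax, Rmin. repeat destruct Rle_dec; lra. Qed.

Lemma Rabs_clamp_sub_le a b x y : a <= b -> Rabs (clamp a b x - clamp a b y) <= Rabs (x - y).
Proof.
  intros. apply Rabs_le_between. unfold clamp, Rmax, Rmin.
  destruct (Rle_or_lt 0 (x - y)); [rewrite Rabs_right by lra | rewrite Rabs_left by lra];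
    repeat destruct Rle_dec; lra.
Qed.

Lemma Rabs_sub_clamp_le a b x z : a <= z <= b -> Rabs (x - clamp a b x) <= Rabs (x - z).
Proof.
  intros. apply Rabs_le_between. unfold clamp, Rmax, Rmin.
  destruct (Rle_or_lt 0 (x - z)); [rewrite Rabs_right by lra | rewrite Rabs_left by lra];
    repeat destruct Rle_dec; lra.
Qed.

Lemma filterlim_clamp a b y : a <= b ->
  filterlim (clamp a b) (locally y) (within (fun z => a <= z <= b) (locally (clamp a b y))).
Proof.
  intros Hab P [eps HP]. exists eps. intros z Hz. apply HP; [| apply clamp_between, Hab].
  apply (Rle_lt_trans _ _ _ (Rabs_clamp_sub_le a b z y Hab)), Hz.
Qed.

Lemma continuous_comp_clamp (f : R -> R) a b : a <= b ->
  (forall x, a <= x <= b ->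
     filterlim f (within (fun z => a <= z <= b) (locally x)) (locally (f x))) ->
  forall y, continuous (fun t => f (clamp a b t)) y.
Proof.
  intros Hab Hf y. eapply filterlim_comp; [apply filterlim_clamp, Hab |].
  apply Hf, clamp_between, Hab.
Qed.

Lemma within_locally_ball (D P : R -> Prop) x : within D (locally x) P ->
  exists d, 0 < d /\ forall y, Rabs (y - x) < d -> D y -> P y.
Proof. intros [eps H]. exists eps. split; [apply cond_pos | exact H]. Qed.

(* The affine continuation of [g] beyond [a, b] with the boundary slopes [g' a], [g' b]: it is
   differentiable on all of [R], which [is_RInt_derive] requires even at the endpoints. *)
Definition C1_extension (g g' : R -> R) (a b x : R) : R :=
  g (clamp a b x) + g' (clamp a b x) * (x - clamp a b x).

Lemma is_derive_C1_extension_between g g' a b x :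
  a <= b -> C1_on_with g g' a b -> a <= x <= b -> is_derive (C1_extension g g' a b) x (g' x).
Proof.
  intros Hab HC [Hxa Hxb]. unfold C1_extension.
  destruct (HC x (conj Hxa Hxb)) as [[_ Hdiff] Hcont].
  assert (Hlim : is_filter_lim (within (fun y => a <= y <= b) (locally x)) x)
    by (intros P [eps HP]; exists eps; intros y Hy _; apply HP, Hy).
  apply is_derive_Reals. intros eps Heps.
  assert (Heps4 : 0 < eps / 4) by lra.
  destruct (within_locally_ball _ _ _ (Hdiff x Hlim (mkposreal _ Heps4))) as [d1 [Hd1 H1]].
  destruct (within_locally_ball _ _ _ (Hcont _ (locally_ball (g' x) (mkposreal _ Heps4))))
    as [d2 [Hd2 H2]].
  exists (mkposreal _ (Rmin_pos _ _ Hd1 Hd2)). intros h Hh0 Hh. simpl in Hh.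
  pose proof (Rmin_l d1 d2); pose proof (Rmin_r d1 d2).
  set (c := clamp a b (x + h)).
  assert (Hc : a <= c <= b) by (apply clamp_between; lra).
  assert (Hcx : Rabs (c - x) <= Rabs h).
  { pose proof (Rabs_clamp_sub_le a b (x + h) x Hab) as Hcl.
    rewrite (clamp_id a b x) in Hcl by lra. now replace (x + h - x) with h in Hcl by ring. }
  assert (Hxc : Rabs (x + h - c) <= Rabs h).
  { pose proof (Rabs_sub_clamp_le a b (x + h) x (conj Hxa Hxb)) as Hcl.
    now replace (x + h - x) with h in Hcl by ring. }
  specialize (H1 c ltac:(lra) Hc). specialize (H2 c ltac:(lra) Hc).
  change (Rabs (g c - g x - (c - x) * g' x) <= eps / 4 * Rabs (c - x)) in H1.
  change (Rabs (g' c - g' x) < eps / 4) in H2.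
  assert (Hhpos : 0 < Rabs h) by (apply Rabs_pos_lt, Hh0).
  rewrite (clamp_id a b x) by lra.
  replace ((g c + g' c * (x + h - c) - (g x + g' x * (x - x))) / h - g' x)
    with (((g c - g x - (c - x) * g' x) + (g' c - g' x) * (x + h - c)) / h)
    by (field; exact Hh0).
  unfold Rdiv. rewrite Rabs_mult, Rabs_inv.
  apply Rmult_lt_reg_r with (Rabs h); [easy |].
  rewrite Rmult_assoc, Rinv_l, Rmult_1_r by lra.
  eapply Rle_lt_trans; [apply Rabs_triang |]. rewrite Rabs_mult.
  assert (Rabs (g' c - g' x) * Rabs (x + h - c) <= eps / 4 * Rabs h)
    by (apply Rmult_le_compat; try apply Rabs_pos; lra).
  nra.
Qed.

Lemma is_derive_C1_extension g g' a b x : a <= b -> C1_on_with g g' a b ->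
  is_derive (C1_extension g g' a b) x (g' (clamp a b x)).
Proof.
  intros Hab HC.
  destruct (Rlt_or_le x a) as [Hxa | Hxa]; [| destruct (Rlt_or_le b x) as [Hxb | Hxb]].
  - replace (clamp a b x) with a by (unfold clamp, Rmax, Rmin; repeat destruct Rle_dec; lra).
    apply (is_derive_ext_loc (fun y => g a + g' a * (y - a))); [| auto_derive; [easy | ring]].
    exists (mkposreal (a - x) ltac:(lra)). intros y Hy.
    apply Rabs_lt_between' in Hy; simpl in Hy. unfold C1_extension, clamp, Rmax, Rmin.
    repeat destruct Rle_dec; try lra; reflexivity.
  - replace (clamp a b x) with b by (unfold clamp, Rmax, Rmin; repeat destruct Rle_dec; lra).
    apply (is_derive_ext_loc (fun y => g b + g' b * (y - b))); [| auto_derive; [easy | ring]].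
    exists (mkposreal (x - b) ltac:(lra)). intros y Hy.
    apply Rabs_lt_between' in Hy; simpl in Hy. unfold C1_extension, clamp, Rmax, Rmin.
    repeat destruct Rle_dec; try lra; reflexivity.
  - rewrite clamp_id by lra. apply is_derive_C1_extension_between; auto.
Qed.

Lemma is_derive_opp_RInt_to (f : R -> R) b t : (forall x, continuous f x) ->
  is_derive (fun t => - RInt f t b) t (f t).
Proof.
  intros Hf. rewrite <- (opp_opp (f t)). apply (is_derive_opp (fun t => RInt f t b)).
  apply (is_derive_RInt' f _ t b); [| apply Hf].
  apply filter_forall. intros u. apply (RInt_correct (V := R_CompleteNormedModule)).
  apply (ex_RInt_continuous (V := R_CompleteNormedModule)). intros; apply Hf.
Qed.

Lemma Rabs_RInt_mult_C1_le a b (g g' f : R -> R) K M : a <= b -> C1_on_with g g' a b ->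
  (forall x, a <= x <= b -> continuous f x) ->
  (forall x, a <= x <= b -> Rabs (g x) <= M) ->
  (forall t, a <= t <= b -> Rabs (RInt f t b) <= K) ->
  Rabs (RInt (fun x => g x * f x) a b) <= K * (M + RInt (fun x => Rabs (g' x)) a b).
Proof.
  intros Hab HC Hf Hg HK.
  set (gh := C1_extension g g' a b). set (gp := fun t => g' (clamp a b t)).
  set (fh := fun t => f (clamp a b t)). set (S := fun t => - RInt fh t b).
  assert (Cfh : forall t, continuous fh t).
  { apply continuous_comp_clamp; [easy |]. intros x Hx.
    apply (filterlim_filter_le_1 _ (filter_le_within (F := locally x) _)), Hf, Hx. }
  assert (Cgp : forall t, continuous gp t)
    by (apply continuous_comp_clamp; [easy |]; intros x Hx; apply (HC x Hx)).
  assert (Dgh : forall t, is_derive gh t (gp t))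
    by (intros t; apply is_derive_C1_extension; easy).
  assert (DS : forall t, is_derive S t (fh t)) by (intros t; apply is_derive_opp_RInt_to, Cfh).
  assert (HS : forall t, a <= t <= b -> Rabs (S t) <= K).
  { intros t Ht. unfold S. rewrite Rabs_Ropp, (RInt_ext_le fh f) by
      (try lra; intros; unfold fh; rewrite clamp_id by lra; reflexivity).
    apply HK, Ht. }
  rewrite (RInt_ext_le _ (fun t => gh t * fh t) a b Hab).
  2:{ intros t Ht. unfold gh, fh, C1_extension. rewrite clamp_id by lra. ring. }
  rewrite (RInt_mult_by_parts gh gp S fh) by auto.
  assert (Hb : S b = 0) by (unfold S; rewrite RInt_point; unfold zero; simpl; ring).
  assert (Ha : Rabs (gh a * S a) <= M * K).
  { unfold gh, C1_extension. rewrite clamp_id by lra. rewrite Rminus_diag, Rmult_0_r, Rplus_0_r.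
    rewrite Rabs_mult. apply Rmult_le_compat; try apply Rabs_pos; [apply Hg | apply HS]; lra. }
  assert (Hint : Rabs (RInt (fun t => gp t * S t) a b) <= K * RInt (fun x => Rabs (g' x)) a b).
  { rewrite (RInt_ext_le (fun x => Rabs (g' x)) (fun t => Rabs (gp t)) a b Hab)
      by (intros t Ht; unfold gp; rewrite clamp_id by lra; reflexivity).
    apply Rabs_RInt_mult_le; auto.
    intros t _. apply (ex_derive_continuous S). eexists; apply DS. }
  rewrite Hb, Rmult_0_r, Rminus_0_l.
  eapply Rle_trans; [unfold Rminus; apply Rabs_triang |]. rewrite !Rabs_Ropp. lra.
Qed.

Lemma Rabs_RInt_tail_le (f : R -> R) a b al0 dl eps t : 0 < dl -> 0 < eps -> a <= t <= b ->
  (forall x, a <= x <= b -> continuous f x) ->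
  (forall x, a <= x <= b -> Rabs (f x) <= 2) ->
  (forall u v r, a <= u -> u <= v -> v <= b -> 0 < r ->
     (forall s, u <= s <= v -> r <= Rabs (s - al0)) -> Rabs (RInt f u v) <= 8 * eps / (dl * r)) ->
  Rabs (RInt f t b) <= 20 * sqrt (eps / dl).
Proof.
  intros Hdl Heps Ht Hf Hf2 Hfar.
  set (rho := sqrt (eps / dl)).
  assert (Hrho : 0 < rho) by (apply sqrt_lt_R0, Rdiv_lt_0_compat; lra).
  assert (Hfar_rho : 8 * eps / (dl * rho) = 8 * rho).
  { assert (Heps' : eps = dl * (rho * rho))
      by (unfold rho; rewrite sqrt_sqrt; [field | apply Rlt_le, Rdiv_lt_0_compat]; lra).
    rewrite Heps' at 1. field. lra. }
  set (p := Rmax t (Rmin b (al0 - rho))). set (q := Rmax p (Rmin b (al0 + rho))).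
  assert (Hp : t <= p <= b /\ (p = t \/ p <= al0 - rho))
    by (unfold p, Rmax, Rmin; repeat destruct Rle_dec; lra).
  assert (Hq : p <= q <= b /\ (q = p \/ al0 - rho <= p /\ q <= al0 + rho)
               /\ (q = b \/ al0 + rho <= q))
    by (unfold q, p, Rmax, Rmin in *; repeat destruct Rle_dec; lra).
  assert (Ex : forall u v, a <= u -> u <= v -> v <= b -> ex_RInt f u v)
    by (intros u v Hu Huv Hv; apply ex_RInt_continuous_le; [easy |]; intros; apply Hf; lra).
  rewrite <- (RInt_Chasles (V := R_CompleteNormedModule) f t p b) by (apply Ex; lra).
  rewrite <- (RInt_Chasles (V := R_CompleteNormedModule) f p q b) by (apply Ex; lra).
  assert (Hleft : Rabs (RInt f t p) <= 8 * rho).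
  { destruct Hp as [Hp [-> | Hp']].
    - rewrite RInt_point. unfold zero; simpl. rewrite Rabs_R0. lra.
    - rewrite <- Hfar_rho. apply Hfar; try lra.
      intros s Hs. rewrite Rabs_left1; lra. }
  assert (Hmid : Rabs (RInt f p q) <= 4 * rho).
  { eapply Rle_trans; [apply abs_RInt_le_const; [lra | apply Ex; lra | intros; apply Hf2; lra] |].
    destruct Hq as [_ [[-> | Hq] _]]; lra. }
  assert (Hright : Rabs (RInt f q b) <= 8 * rho).
  { destruct Hq as [Hq [_ [Hqb | Hq']]].
    - rewrite Hqb, RInt_point. unfold zero; simpl. rewrite Rabs_R0. lra.
    - rewrite <- Hfar_rho. apply Hfar; try lra.
      intros s Hs. rewrite Rabs_right; lra. }
  unfold plus; simpl.
  eapply Rle_trans; [apply Rabs_triang |].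
  eapply Rle_trans; [apply Rplus_le_compat_l, Rabs_triang |]. lra.
Qed.

Section Phase.

Variables (kappa : R) (m : Z) (x0 : R * R) (l : Z).
Hypothesis hkappa : 0 < kappa.

Lemma kappa_dPhi_l t : kappa * dPhi_l kappa m x0 l t = kappa * dPhi m x0 t - IZR l.
Proof. unfold dPhi_l. field. lra. Qed.

Lemma h_l_sinc t : h_l kappa m x0 l t = / sinc (PI * kappa * dPhi_l kappa m x0 l t).
Proof.
  pose proof PI_RGT_0. unfold h_l, sinc. rewrite Derive_Phi_l.
  set (d := dPhi_l kappa m x0 l t).
  destruct (Req_EM_T d 0) as [Hd | Hd], (Req_EM_T (PI * kappa * d) 0) as [Hz | Hz].
  - now rewrite Rinv_1.
  - exfalso. apply Hz. rewrite Hd. ring.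
  - exfalso. apply Rmult_integral in Hz as [Hz | Hz]; [nra | easy].
  - unfold Rdiv. rewrite Rinv_mult, Rinv_inv. ring.
Qed.

Lemma h_l_of_ne t : dPhi_l kappa m x0 l t <> 0 ->
  h_l kappa m x0 l t
  = PI * kappa * dPhi_l kappa m x0 l t / sin (PI * kappa * dPhi_l kappa m x0 l t).
Proof.
  intros Hd. unfold h_l. rewrite Derive_Phi_l.
  destruct (Req_EM_T (dPhi_l kappa m x0 l t) 0); [easy | reflexivity].
Qed.

Lemma Rabs_PI_kappa_le d : Rabs (kappa * d) <= 1 / 2 -> Rabs (PI * kappa * d) <= PI / 2.
Proof.
  intros Hd. pose proof PI_RGT_0. rewrite Rmult_assoc, Rabs_mult, (Rabs_right PI) by lra.
  nra.
Qed.

Lemma Rabs_h_l_le t : Rabs (kappa * dPhi_l kappa m x0 l t) <= 1 / 2 ->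
  Rabs (h_l kappa m x0 l t) <= 2.
Proof.
  intros Ht. pose proof (sinc_ge_half _ (Rabs_PI_kappa_le _ Ht)).
  rewrite h_l_sinc, Rabs_inv, Rabs_right by lra.
  replace 2 with (/ (1 / 2)) by field. apply Rinv_le_contravar; lra.
Qed.

Lemma continuous_h_l t : Rabs (kappa * dPhi_l kappa m x0 l t) <= 1 / 2 ->
  continuous (h_l kappa m x0 l) t.
Proof.
  intros Ht. pose proof (sinc_ge_half _ (Rabs_PI_kappa_le _ Ht)).
  apply (continuous_ext (fun t => / sinc (PI * kappa * dPhi_l kappa m x0 l t)));
    [intros; symmetry; apply h_l_sinc |].
  apply (continuous_comp (fun t => sinc (PI * kappa * dPhi_l kappa m x0 l t)) Rinv);
    [| apply continuous_Rinv; lra].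
  apply (continuous_comp (fun t => PI * kappa * dPhi_l kappa m x0 l t) sinc);
    [| apply continuous_sinc].
  apply (ex_derive_continuous (fun t => PI * kappa * dPhi_l kappa m x0 l t)).
  unfold dPhi_l, dPhi. auto_derive. easy.
Qed.

Lemma Rabs_dPhi_l_ge a b al0 t : -PI <= a -> b <= PI ->
  const_sign_on (ddPhi m x0) a b -> a <= al0 <= b ->
  kappa * dPhi m x0 al0 = IZR l -> ddPhi m x0 al0 <> 0 -> a <= t <= b ->
  Rabs (ddPhi m x0 al0) * Rabs (t - al0) / 4 <= Rabs (dPhi_l kappa m x0 l t).
Proof.
  intros Ha Hb Hsign Hal0 Hl Hdd0 Ht.
  set (mu := (t + al0) / 2). set (d := (t - al0) / 2).
  assert (Hmu : a <= mu <= b) by (unfold mu; lra).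
  assert (HD : dPhi_l kappa m x0 l t = 2 * sin d * ddPhi m x0 mu).
  { unfold dPhi_l. replace (IZR l / kappa) with (dPhi m x0 al0) by (rewrite <- Hl; field; lra).
    apply dPhi_sub. }
  pose proof (ddPhi_add m x0 t al0) as Hadd. fold mu d in Hadd.
  (* [ddPhi] has one sign on [a, b], so [ddPhi t + ddPhi al0] dominates [ddPhi al0] *)
  assert (Hcos : 0 < cos d /\ Rabs (ddPhi m x0 al0) <= 2 * Rabs (ddPhi m x0 mu)).
  { pose proof (COS_bound d).
    destruct Hsign as [Hs | Hs]; pose proof (Hs t Ht); pose proof (Hs al0 Hal0);
      pose proof (Hs mu Hmu).
    - rewrite !Rabs_right by lra. destruct (Rle_or_lt (cos d) 0); nra.
    - rewrite !Rabs_left1 by lra. destruct (Rle_or_lt (cos d) 0); nra. }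
  destruct Hcos as [Hcos Hmid].
  assert (Hd : Rabs d <= PI / 2).
  { destruct (Rle_or_lt (Rabs d) (PI / 2)) as [| Hgt]; [easy | exfalso].
    assert (Rabs d <= PI) by (unfold d; apply Rabs_le_between; lra).
    assert (Hc : cos (Rabs d) <= 0) by (apply cos_le_0; lra).
    destruct (Rle_or_lt 0 d); [rewrite Rabs_right in Hc | rewrite Rabs_left, cos_neg in Hc]; lra. }
  pose proof (Rabs_sin_ge_half d Hd).
  replace (Rabs (t - al0)) with (2 * Rabs d)
    by (unfold d; rewrite Rabs_div, (Rabs_right 2); [field | lra | lra]).
  rewrite HD, !Rabs_mult, (Rabs_right 2) by lra.
  pose proof (Rabs_pos d); pose proof (Rabs_pos (ddPhi m x0 al0)). nra.
Qed.

Lemma Rabs_sin_PI_kappa_ge t lam : Rabs (kappa * dPhi_l kappa m x0 l t) <= 1 / 2 ->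
  lam <= Rabs (dPhi_l kappa m x0 l t) ->
  PI * kappa * lam / 2 <= Rabs (sin (PI * kappa * dPhi_l kappa m x0 l t)).
Proof.
  intros Hhalf Hlam. pose proof PI_RGT_0.
  eapply Rle_trans; [| apply Rabs_sin_ge_half, Rabs_PI_kappa_le, Hhalf].
  rewrite !Rabs_mult, (Rabs_right PI), (Rabs_right kappa) by lra.
  apply Rmult_le_compat_r; [lra |]. apply Rmult_le_compat_l; nra.
Qed.

Lemma sin_PI_kappa_dPhi_l_neq0 t : Rabs (kappa * dPhi_l kappa m x0 l t) <= 1 / 2 ->
  dPhi_l kappa m x0 l t <> 0 -> sin (PI * kappa * dPhi_l kappa m x0 l t) <> 0.
Proof.
  intros Hhalf HD Hz.
  pose proof (Rabs_sin_PI_kappa_ge t _ Hhalf (Rle_refl _)) as Hs.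
  rewrite Hz, Rabs_R0 in Hs. pose proof (Rabs_pos_lt _ HD). pose proof PI_RGT_0.
  assert (0 < PI * kappa * Rabs (dPhi_l kappa m x0 l t))
    by (apply Rmult_lt_0_compat; [apply Rmult_lt_0_compat |]; lra).
  lra.
Qed.

(* [amp eps = h_l / psi'] for the phase [psi = 2 pi Phi_l / eps]. *)
Definition amp (eps t : R) : R := eps * kappa / (2 * sin (PI * kappa * dPhi_l kappa m x0 l t)).

Definition amp' (eps t : R) : R :=
  - (eps * kappa * PI * kappa) * (ddPhi m x0 t * cos (PI * kappa * dPhi_l kappa m x0 l t))
  / (2 * sin (PI * kappa * dPhi_l kappa m x0 l t) ^ 2).

Lemma is_derive_amp eps t : sin (PI * kappa * dPhi_l kappa m x0 l t) <> 0 ->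
  is_derive (amp eps) t (amp' eps t).
Proof.
  intros Hsin. unfold dPhi_l, dPhi, Rminus in Hsin.
  unfold amp, amp', dPhi_l, dPhi, ddPhi, Rminus. auto_derive; [lra |]. field. exact Hsin.
Qed.

Lemma continuous_amp' eps t : sin (PI * kappa * dPhi_l kappa m x0 l t) <> 0 ->
  continuous (amp' eps) t.
Proof.
  intros Hsin. unfold dPhi_l, dPhi, Rminus in Hsin. apply (ex_derive_continuous (amp' eps)).
  unfold amp', dPhi_l, dPhi, ddPhi, Rminus. auto_derive.
  repeat apply Rmult_integral_contrapositive_currified; try easy; lra.
Qed.

Lemma const_sign_on_amp' eps u v : 0 < eps -> const_sign_on (ddPhi m x0) u v ->
  (forall t, u <= t <= v -> Rabs (kappa * dPhi_l kappa m x0 l t) <= 1 / 2) ->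
  (forall t, u <= t <= v -> sin (PI * kappa * dPhi_l kappa m x0 l t) <> 0) ->
  const_sign_on (amp' eps) u v.
Proof.
  intros Heps Hsign Hhalf Hsin.
  set (th := fun t => PI * kappa * dPhi_l kappa m x0 l t).
  assert (Hfac : forall t, u <= t <= v ->
    0 < eps * kappa * PI * kappa /\ 0 <= cos (th t) /\ 0 < / (2 * sin (th t) ^ 2)).
  { intros t Ht. pose proof PI_RGT_0.
    split; [repeat (apply Rmult_lt_0_compat; [| lra]); lra | split].
    - pose proof (Rabs_PI_kappa_le _ (Hhalf t Ht)) as Hb. apply Rabs_le_between in Hb.
      apply cos_ge_0; unfold th; lra.
    - apply Rinv_0_lt_compat. unfold th. pose proof (pow2_gt_0 _ (Hsin t Ht)). lra. }
  destruct Hsign as [Hs | Hs]; [right | left]; intros t Ht;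
    destruct (Hfac t Ht) as (Hc & Hcos & Hinv); pose proof (Hs t Ht);
    unfold amp', Rdiv; fold (th t).
  - assert (0 <= eps * kappa * PI * kappa * (ddPhi m x0 t * cos (th t)) * / (2 * sin (th t) ^ 2))
      by (apply Rmult_le_pos; [apply Rmult_le_pos; [| apply Rmult_le_pos] |]; lra). lra.
  - assert (0 <= eps * kappa * PI * kappa * (- ddPhi m x0 t * cos (th t)) * / (2 * sin (th t) ^ 2))
      by (apply Rmult_le_pos; [apply Rmult_le_pos; [| apply Rmult_le_pos] |]; lra). lra.
Qed.

Lemma Rabs_amp_le eps t lam : 0 < eps -> 0 < lam ->
  Rabs (kappa * dPhi_l kappa m x0 l t) <= 1 / 2 -> lam <= Rabs (dPhi_l kappa m x0 l t) ->
  Rabs (amp eps t) <= eps / (PI * lam).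
Proof.
  intros Heps Hlam Hhalf Hlow. pose proof PI_RGT_0.
  pose proof (Rabs_sin_PI_kappa_ge t lam Hhalf Hlow) as Hsin.
  assert (Hpos : 0 < PI * kappa * lam)
    by (apply Rmult_lt_0_compat; [apply Rmult_lt_0_compat |]; lra).
  unfold amp, Rdiv. rewrite Rabs_mult, Rabs_inv, (Rabs_right (eps * kappa)) by nra.
  rewrite Rabs_mult, (Rabs_right 2) by lra.
  apply Rle_trans with (eps * kappa * / (2 * (PI * kappa * lam / 2))).
  - apply Rmult_le_compat_l; [nra |]. apply Rinv_le_contravar; lra.
  - right. field. lra.
Qed.

Lemma h_l_mul_amp (W' : R -> R) eps t : 0 < eps ->
  Rabs (kappa * dPhi_l kappa m x0 l t) <= 1 / 2 -> dPhi_l kappa m x0 l t <> 0 ->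
  h_l kappa m x0 l t * W' (2 * PI * (Phi_l kappa m x0 l t / eps))
  = amp eps t * (W' (2 * PI * (Phi_l kappa m x0 l t / eps))
                 * (2 * PI * (dPhi_l kappa m x0 l t / eps))).
Proof.
  intros Heps Hhalf HD. pose proof (sin_PI_kappa_dPhi_l_neq0 t Hhalf HD).
  rewrite h_l_of_ne by exact HD. unfold amp. field. lra.
Qed.

(* A first-derivative (van der Corput) estimate, by parts against the monotone [amp eps]. *)
Lemma Rabs_RInt_h_l_phase_le (W W' : R -> R) eps u v lam : 0 < eps -> u <= v -> 0 < lam ->
  (forall y, is_derive W y (W' y)) -> (forall y, continuous W' y) ->
  (forall y, Rabs (W y) <= 1) -> const_sign_on (ddPhi m x0) u v ->
  (forall t, u <= t <= v -> Rabs (kappa * dPhi_l kappa m x0 l t) <= 1 / 2) ->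
  (forall t, u <= t <= v -> lam <= Rabs (dPhi_l kappa m x0 l t)) ->
  Rabs (RInt (fun t => h_l kappa m x0 l t * W' (2 * PI * (Phi_l kappa m x0 l t / eps))) u v)
    <= 2 * eps / lam.
Proof.
  intros Heps Huv Hlam DW CW' HW Hsign Hhalf Hlow.
  set (D := dPhi_l kappa m x0 l). set (ps := fun t => 2 * PI * (Phi_l kappa m x0 l t / eps)).
  assert (HD : forall t, u <= t <= v -> D t <> 0).
  { intros t Ht Hz. specialize (Hlow t Ht). unfold D in Hz. rewrite Hz, Rabs_R0 in Hlow. lra. }
  assert (Hsin : forall t, u <= t <= v -> sin (PI * kappa * D t) <> 0)
    by (intros t Ht; apply sin_PI_kappa_dPhi_l_neq0; auto).
  assert (Dps : forall t, is_derive ps t (2 * PI * (D t / eps))).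
  { intros t. unfold ps, D, Phi_l, Phi, dotdir, dPhi_l, dPhi. auto_derive; [easy |]. field. lra. }
  rewrite (RInt_ext_le _ (fun t => amp eps t * (W' (ps t) * (2 * PI * (D t / eps)))) u v Huv)
    by (intros t Ht; apply h_l_mul_amp; [easy | apply Hhalf; lra | apply HD; lra]).
  eapply Rle_trans.
  { apply (Rabs_RInt_mult_monotone_le (amp eps) (amp' eps) (fun t => W (ps t))); auto.
    - intros t Ht. apply is_derive_amp, Hsin, Ht.
    - intros t _. rewrite Rmult_comm. apply (is_derive_comp W ps); [apply DW | apply Dps].
    - intros t Ht. apply continuous_amp', Hsin, Ht.
    - intros t _. apply (continuous_mult (fun t => W' (ps t)) (fun t => 2 * PI * (D t / eps))).
      + apply (continuous_comp ps W'); [| apply CW'].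
        apply (ex_derive_continuous ps). eexists; apply Dps.
      + apply (ex_derive_continuous (fun t => 2 * PI * (D t / eps))).
        unfold D, dPhi_l, dPhi. auto_derive. easy.
    - apply const_sign_on_amp'; auto. }
  pose proof (Rabs_amp_le eps u lam Heps Hlam (Hhalf u ltac:(lra)) (Hlow u ltac:(lra))).
  pose proof (Rabs_amp_le eps v lam Heps Hlam (Hhalf v ltac:(lra)) (Hlow v ltac:(lra))).
  pose proof PI2_3_2.
  assert (eps / (PI * lam) <= eps / (2 * lam))
    by (unfold Rdiv; apply Rmult_le_compat_l; [lra | apply Rinv_le_contravar; nra]).
  replace (2 * eps / lam) with (2 * (2 * (eps / (2 * lam)))) by (field; lra). lra.
Qed.

Lemma continuous_h_l_phase (W' : R -> R) eps s : (forall y, continuous W' y) ->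
  Rabs (kappa * dPhi_l kappa m x0 l s) <= 1 / 2 ->
  continuous (fun s => h_l kappa m x0 l s * W' (2 * PI * (Phi_l kappa m x0 l s / eps))) s.
Proof.
  intros CW' Hs. apply (continuous_mult (h_l kappa m x0 l)); [apply continuous_h_l, Hs |].
  apply (continuous_comp (fun s => 2 * PI * (Phi_l kappa m x0 l s / eps)) W'); [| apply CW'].
  apply (ex_derive_continuous (fun s => 2 * PI * (Phi_l kappa m x0 l s / eps))).
  unfold Phi_l, Phi, dotdir. auto_derive. easy.
Qed.

Lemma Rabs_RInt_h_l_tail_le (W W' : R -> R) a b al0 eps t :
  -PI <= a -> b <= PI -> 0 < eps -> a <= t <= b ->
  (forall y, is_derive W y (W' y)) -> (forall y, continuous W' y) ->
  (forall y, Rabs (W y) <= 1) -> (forall y, Rabs (W' y) <= 1) ->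
  const_sign_on (ddPhi m x0) a b -> a <= al0 <= b ->
  kappa * dPhi m x0 al0 = IZR l -> ddPhi m x0 al0 <> 0 ->
  (forall s, a <= s <= b -> Rabs (kappa * dPhi_l kappa m x0 l s) <= 1 / 2) ->
  Rabs (RInt (fun s => h_l kappa m x0 l s * W' (2 * PI * (Phi_l kappa m x0 l s / eps))) t b)
    <= 20 * sqrt (eps / Rabs (ddPhi m x0 al0)).
Proof.
  intros Ha Hb Heps Ht DW CW' HW HW' Hsign Hal0 Hl Hdd0 Hhalf.
  assert (Hdl : 0 < Rabs (ddPhi m x0 al0)) by (apply Rabs_pos_lt, Hdd0).
  apply (Rabs_RInt_tail_le _ a b al0); [easy | easy | easy | | |].
  - intros s Hs. apply continuous_h_l_phase, Hhalf, Hs; easy.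
  - intros s Hs. rewrite Rabs_mult, <- (Rmult_1_r 2).
    apply Rmult_le_compat; try apply Rabs_pos; [apply Rabs_h_l_le, Hhalf, Hs | apply HW'].
  - intros u v r Hu Huv Hv Hr Hfar.
    replace (8 * eps / (Rabs (ddPhi m x0 al0) * r)) with (2 * eps / (Rabs (ddPhi m x0 al0) * r / 4))
      by (field; lra).
    apply (Rabs_RInt_h_l_phase_le W W'); try easy.
    + apply Rmult_lt_0_compat; [apply Rmult_lt_0_compat |]; lra.
    + apply (const_sign_on_sub _ a b); easy.
    + intros s Hs. apply Hhalf. lra.
    + intros s Hs. eapply Rle_trans; [| apply (Rabs_dPhi_l_ge a b al0); try easy; lra].
      apply Rmult_le_compat_r; [lra |]. apply Rmult_le_compat_l; [lra | apply Hfar, Hs].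
Qed.

Lemma Rabs_RInt_g_h_l_le (W W' : R -> R) a b al0 eps (g g' : R -> R) M :
  -PI <= a -> a <= b -> b <= PI -> 0 < eps ->
  (forall y, is_derive W y (W' y)) -> (forall y, continuous W' y) ->
  (forall y, Rabs (W y) <= 1) -> (forall y, Rabs (W' y) <= 1) ->
  const_sign_on (ddPhi m x0) a b -> a <= al0 <= b ->
  kappa * dPhi m x0 al0 = IZR l -> ddPhi m x0 al0 <> 0 ->
  (forall s, a <= s <= b -> Rabs (kappa * dPhi_l kappa m x0 l s) <= 1 / 2) ->
  C1_on_with g g' a b -> (forall s, a <= s <= b -> Rabs (g s) <= M) ->
  Rabs (RInt (fun s => g s * (h_l kappa m x0 l s * W' (2 * PI * (Phi_l kappa m x0 l s / eps)))) a b)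
    <= 20 * sqrt (eps / Rabs (ddPhi m x0 al0)) * (M + RInt (fun s => Rabs (g' s)) a b).
Proof.
  intros Ha Hab Hb Heps DW CW' HW HW' Hsign Hal0 Hl Hdd0 Hhalf HC HM.
  apply Rabs_RInt_mult_C1_le; try easy.
  - intros s Hs. apply continuous_h_l_phase, Hhalf, Hs; easy.
  - intros t Ht. apply (Rabs_RInt_h_l_tail_le W W' a b); easy.
Qed.

Lemma Cmod_CInt_g_h_l_e_le a b al0 eps (g g' : R -> R) M :
  -PI <= a -> a <= b -> b <= PI -> 0 < eps ->
  const_sign_on (ddPhi m x0) a b -> a <= al0 <= b ->
  kappa * dPhi m x0 al0 = IZR l -> ddPhi m x0 al0 <> 0 ->
  (forall s, a <= s <= b -> Rabs (kappa * dPhi_l kappa m x0 l s) <= 1 / 2) ->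
  C1_on_with g g' a b -> (forall s, a <= s <= b -> Rabs (g s) <= M) ->
  Cmod (CInt (fun s => Cmult (RtoC (g s * h_l kappa m x0 l s))
                             (e (Phi_l kappa m x0 l s / eps))) a b)
    <= sqrt 2 * (20 * sqrt (eps / Rabs (ddPhi m x0 al0)) * (M + RInt (fun s => Rabs (g' s)) a b)).
Proof.
  intros Ha Hab Hb Heps Hsign Hal0 Hl Hdd0 Hhalf HC HM.
  set (K := 20 * sqrt (eps / Rabs (ddPhi m x0 al0)) * (M + RInt (fun s => Rabs (g' s)) a b)).
  assert (Hre : Rabs (RInt (fun s => g s * (h_l kappa m x0 l s
                   * cos (2 * PI * (Phi_l kappa m x0 l s / eps)))) a b)
                 <= K).
  { apply (Rabs_RInt_g_h_l_le sin cos); try easy.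
    - exact is_derive_sin.
    - exact continuous_cos.
    - intros y. apply Rabs_le, SIN_bound.
    - intros y. apply Rabs_le, COS_bound. }
  assert (Him : Rabs (RInt (fun s => g s * (h_l kappa m x0 l s
                   * sin (2 * PI * (Phi_l kappa m x0 l s / eps)))) a b)
                 <= K).
  { apply (Rabs_RInt_g_h_l_le (fun y => - cos y) sin); try easy.
    - intros y. rewrite <- (Ropp_involutive (sin y)). apply (is_derive_opp cos), is_derive_cos.
    - exact continuous_sin.
    - intros y. rewrite Rabs_Ropp. apply Rabs_le, COS_bound.
    - intros y. apply Rabs_le, SIN_bound. }
  eapply Rle_trans; [apply Cmod_2Rmax |]. apply Rmult_le_compat_l; [apply sqrt_pos |].
  unfold CInt, e; simpl.
  apply Rmax_lub; erewrite RInt_ext_le;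
    [exact Hre | exact Hab | intros; simpl; ring | exact Him | exact Hab | intros; simpl; ring].
Qed.

End Phase.

Theorem mainTheorem10 (kappa : R) (x0 : R * R) (hkappa : 0 < kappa) :
  exists c : R,
  forall (m : Z) (a b : R) (l : Z) (g g' : R -> R) (alpha0 : R),
    m <> 0%Z ->
    -PI <= a -> a <= b -> b <= PI ->
    C1_on_with g g' a b ->
    (forall alpha, a < alpha < b -> Derive (Derive (Phi m x0)) alpha <> 0) ->
    a <= alpha0 <= b ->
    kappa * Derive (Phi m x0) alpha0 = IZR l ->
    Derive (Derive (Phi m x0)) alpha0 <> 0 ->
    (forall alpha, a <= alpha <= b -> Rabs (kappa * Derive (Phi m x0) alpha - IZR l) <= 1/2) ->
    forall eps : R, 0 < eps ->
    forall M : R, (forall alpha, a <= alpha <= b -> Rabs (g alpha) <= M) ->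
      Cmod (CInt (fun alpha =>
                    Cmult (RtoC (g alpha * h_l kappa m x0 l alpha))
                          (e (Phi_l kappa m x0 l alpha / eps))) a b)
      <= c * sqrt eps * (M + RInt (fun alpha => Rabs (g' alpha)) a b)
           * / sqrt (Rabs (Derive (Derive (Phi m x0)) alpha0)).
Proof.
  exists (20 * sqrt 2).
  intros m a b l g g' al0 _ Ha Hab Hb HC Hdd Hal0 Hl Hdd0 Hhalf eps Heps M HM.
  rewrite Derive_Derive_Phi in Hdd0 |- *. rewrite Derive_Phi in Hl.
  eapply Rle_trans.
  { apply (Cmod_CInt_g_h_l_e_le kappa m x0 l hkappa a b al0 eps g g' M); try easy.
    - apply const_sign_on_of_no_root; [apply continuous_ddPhi |].
      intros t Ht. rewrite <- Derive_Derive_Phi. apply Hdd, Ht.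
    - intros s Hs. rewrite kappa_dPhi_l, <- Derive_Phi by lra. apply Hhalf, Hs. }
  rewrite sqrt_div_alt by (apply Rabs_pos_lt, Hdd0). apply Req_le. unfold Rdiv. ring.
Qed.
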